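(* Let $m,p,n$ be positive integers with $p\mid m$, and let $g\in G(m,p,n)$ be $p$-connected and not a diagonal reflection. Then there exists a reflection $s\in G(m,p,n)$ with $s\le_\perp g$ if and only if $\operatorname{codim}(g)=2$ and the non-1 eigenvalues of $g$ are $\zeta_m^{c}$ and $\zeta_m^{-c}$ for some integer $c$.
   Context: $\zeta_m=e^{2\pi i/m}$. $G(m,1,n)$ is the group of $n\times n$ monomial matrices whose nonzero entries are $m$-th roots of unity, acting on $V=\mathbb{C}^n$; for $p\mid m$, $G(m,p,n)$ is the subgroup of elements whose nonzero entries multiply to an $(m/p)$-th root of unity. A reflection is an element of finite order fixing a hyperplane pointwise; a diagonal reflection is a diagonal matrix that is a reflection. $\operatorname{codim}(g)=n-\dim\{v\in V:gv=v\}$, and the codimension order is $a\le_\perp c$ iff $\operatorname{codim}(a)+\operatorname{codim}(a^{-1}c)=\operatorname{codim}(c)$. A diagonal matrix $g\ne 1$ whose non-1 eigenvalues (with multiplicity) are $\zeta_m^{c_1},\dots,\zeta_m^{c_k}$ is $p$-connected if $p\mid c_1+\dots+c_k$ but $p\nmid\sum_{i\in I}c_i$ for every nonempty proper subset $I\subsetneq\{1,\dots,k\}$. *)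

From mathcomp Require Import all_boot all_algebra.
From mathcomp Require Import reals trigo complex.
Import GRing.Theory Num.Theory.
Set Implicit Arguments. Unset Strict Implicit. Unset Printing Implicit Defensive.
Local Open Scope ring_scope.
Local Open Scope complex_scope.

Section Defs.
Variable R : realType.
Local Notation C := R[i].

Definition zeta (m : nat) : C :=
  (cos (2 * pi / m%:R))%:C + 'i * (sin (2 * pi / m%:R))%:C.

Variable n : nat.

Definition monomial (g : 'M[C]_n) : Prop :=
  (forall i, #|[set j | g i j != 0]| = 1%N) /\
  (forall j, #|[set i | g i j != 0]| = 1%N).

Definition inGm1n (m : nat) (g : 'M[C]_n) : Prop :=
  monomial g /\ (forall i j, g i j != 0 -> g i j ^+ m = 1).

Definition inGmpn (m p : nat) (g : 'M[C]_n) : Prop :=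
  inGm1n m g /\
  (\prod_(i < n) \prod_(j < n | g i j != 0) g i j) ^+ (m %/ p) = 1.

(* fixed space {v in V : g v = v} (as the row space of a matrix whose rows
   are the transposed fixed column vectors) *)
Definition fixspace (g : 'M[C]_n) : 'M[C]_n := kermx (g - 1%:M)^T.

Definition codim (g : 'M[C]_n) : nat := (n - \rank (fixspace g))%N.

Definition finite_order (g : 'M[C]_n) : Prop :=
  exists k : nat, (0 < k)%N /\ iter k (mulmx g) 1%:M = 1%:M.

Definition reflection (g : 'M[C]_n) : Prop :=
  finite_order g /\ g != 1%:M /\
  exists H : 'M[C]_n, \rank H = n.-1 /\ (H <= fixspace g)%MS.

Definition diag_reflection (g : 'M[C]_n) : Prop :=
  is_diag_mx g /\ reflection g.

Definition le_perp (a c : 'M[C]_n) : Prop :=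
  (codim a + codim (invmx a *m c))%N = codim c.

Definition p_connected (m p : nat) (g : 'M[C]_n) : Prop :=
  is_diag_mx g /\ g != 1%:M /\
  exists c : 'I_n -> int,
    (forall i, g i i = zeta m ^ c i) /\
    let S := [set i | g i i != 1] in
    (p%:Z %| \sum_(i in S) c i)%Z /\
    (forall I : {set 'I_n}, I != set0 -> I \proper S ->
        ~~ (p%:Z %| \sum_(i in I) c i)%Z).
End Defs.

From mathcomp Require Import all_boot all_algebra.
From mathcomp Require Import reals trigo complex.
From mathcomp Require Import order perm zify ring.
Import Order.TTheory GRing.Theory Num.Theory.
Set Implicit Arguments. Unset Strict Implicit. Unset Printing Implicit Defensive.
Local Open Scope ring_scope.

(* Additivity of codimension turns a reflection [s <=_perp g] into a vector
   [v] with [g v = s v <> v].  A reflection of G(m,p,n) either swaps two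
   coordinates [x], [y] (with entries [a], [a^-1]) or is diagonal with a single
   eigenvalue [<> 1], an (m/p)-th root of unity.  In the first case
   [g_xx g_yy = 1] with both factors [<> 1], so [p] divides [c_x + c_y] and
   minimality in p-connectedness makes {x, y} the whole support of [g]; in the
   second case [g_ii = s_ii] forces [p | c_i], the support of [g] is {i}, and
   [g] would be a diagonal reflection.  Conversely, the permutation matrix of
   the transposition (i j) is a reflection [s] with [rank (s g - 1) = 1]. *)

Section RootsOfUnity.
Local Open Scope complex_scope.
Variable R : realType.

Definition cis (t : R) : R[i] := (cos t)%:C + 'i * (sin t)%:C.

Lemma cisE t : cis t = Complex (cos t) (sin t).
Proof. by rewrite /cis; simpc. Qed.

Lemma cisD s t : cis s * cis t = cis (s + t).
Proof. by rewrite !cisE cosD sinD; simpc; rewrite [X in _ +i* X]addrC. Qed.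

Lemma cisMn t k : cis t ^+ k = cis (t *+ k).
Proof.
elim: k => [|k IHk]; first by rewrite expr0 mulr0n cisE cos0 sin0.
by rewrite exprS IHk cisD mulrS.
Qed.

(* sin is positive on (0, pi) and negative on (pi, 2 pi), and cos pi = -1. *)
Lemma cis_neq1 t : 0 < t < pi *+ 2 -> cis t != 1.
Proof.
case/andP=> t_gt0 t_lt2pi; rewrite cisE; apply/eqP=> -[cos1 sin0].
have [t_lt_pi|pi_lt_t|t_pi] := ltrgtP t pi.
- by move: (@sin_gt0_pi _ t); rewrite t_gt0 t_lt_pi sin0 ltxx => /(_ isT).
- have : sin ((t - pi) + pi) < 0.
    by rewrite sinDpi oppr_lt0 sin_gt0_pi // subr_gt0 pi_lt_t /= ltrBlDr -mulr2n.
  by rewrite subrK sin0 ltxx.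
- move: cos1; rewrite t_pi cospi => /eqP.
  by rewrite eq_sym -addr_eq0 -mulr2n pnatr_eq0.
Qed.

Variable m : nat.
Hypothesis m_gt0 : (0 < m)%N.

Lemma zetaXn k : zeta R m ^+ k = cis ((2 * pi / m%:R) *+ k).
Proof. exact: cisMn. Qed.

Lemma zeta_prim : m.-primitive_root (zeta R m).
Proof.
have m_pos : (0 : R) < m%:R by rewrite ltr0n.
have zeta_m : zeta R m ^+ m = 1.
  rewrite zetaXn -mulr_natr mulfVK ?pnatr_eq0 -?lt0n // cisE.
  by rewrite mulr_natl cos2pi sin2pi.
have [k kP k_dvd_m] := prim_order_exists m_gt0 zeta_m.
have k_gt0 := prim_order_gt0 kP.
suff k_eq_m : k = m by rewrite k_eq_m in kP.
apply/eqP; rewrite eqn_leq (dvdn_leq m_gt0 k_dvd_m) /= leqNgt.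
apply/negP => k_lt_m.
move: (prim_expr_order kP); rewrite zetaXn; apply/eqP/cis_neq1.
rewrite -mulr_natr mulr_gt0 ?ltr0n ?divr_gt0 ?mulr_gt0 ?pi_gt0 //=.
rewrite mulrAC ltr_pdivrMr // -[pi *+ 2]mulr_natl.
by rewrite ltr_pM2l ?ltr_nat // mulr_gt0 ?pi_gt0.
Qed.

Lemma zeta_unit : zeta R m \is a GRing.unit.
Proof.
rewrite unitfE; apply: contra_eqN (prim_expr_order zeta_prim) => /eqP->.
by rewrite expr0n eqn0Ngt m_gt0 eq_sym oner_eq0.
Qed.

Lemma zeta_expz_eq1 (c : int) : zeta R m ^ c = 1 -> ((m : int) %| c)%Z.
Proof.
have dvd_m k : zeta R m ^+ k = 1 -> (m %| k)%N.
  by move/eqP; rewrite -(prim_order_dvd zeta_prim).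
case: c => k; first by rewrite dvdzE => /dvd_m.
by rewrite NegzE -invr_expz => /eqP; rewrite invr_eq1 dvdzE => /eqP/dvd_m.
Qed.

End RootsOfUnity.

Section MatrixFacts.
Variable F : fieldType.

Lemma rank_le1_minor m n (A : 'M[F]_(m, n)) : (\rank A <= 1)%N ->
  forall i j k l, A i k * A j l = A i l * A j k.
Proof.
move=> rA i j k l; rewrite -(mulmx_base A).
move: (col_base A) (row_base A) rA; case: (\rank A) => [|[|r]] // cb rb _.
  by rewrite !mxE !big_ord0 !mul0r.
by rewrite !mxE !big_ord1; ring.
Qed.

Lemma rank_outer m n (u : 'I_m -> F) (w : 'I_n -> F) i0 j0 :
  u i0 != 0 -> w j0 != 0 -> \rank (\matrix_(i < m, j < n) (u i * w j)) = 1%N.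
Proof.
move=> u_i0 w_j0; apply/eqP; rewrite eqn_leq; apply/andP; split.
  have -> : \matrix_(i, j) (u i * w j) = (\col_i u i) *m (\row_j w j).
    by apply/matrixP => i j; rewrite !mxE big_ord1 !mxE.
  exact: leq_trans (mxrankM_maxl _ _) (rank_leq_col _).
rewrite lt0n mxrank_eq0; apply/eqP => /matrixP/(_ i0 j0)/eqP.
by rewrite !mxE mulf_eq0 (negbTE u_i0) (negbTE w_j0).
Qed.

Lemma mulmx_row_single m n p (A : 'M[F]_(m, n)) (B : 'M[F]_(n, p)) i j k :
  (forall l, l != j -> A i l = 0) -> (A *m B) i k = A i j * B j k.
Proof.
move=> Ai0; rewrite mxE (bigD1 j) //= big1 ?addr0 // => l lj.
by rewrite Ai0 ?mul0r.
Qed.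

Lemma mulmx_diagE m n (A : 'M[F]_m) (B : 'M[F]_(m, n)) i k :
  is_diag_mx A -> (A *m B) i k = A i i * B i k.
Proof.
move=> /is_diag_mxP A_diag; apply: mulmx_row_single => l li.
by rewrite A_diag // eq_sym.
Qed.

Lemma rank_diag_mx n (d : 'rV[F]_n) :
  \rank (diag_mx d) = #|[set i | d 0 i != 0]|.
Proof.
pose D := [set i | d 0 i != 0].
have eqD : (diag_mx d :=: \sum_(i in D) <<delta_mx 0 i : 'rV[F]_n>>)%MS.
  apply/eqmxP/andP; split.
    apply/row_subP => i; rewrite row_diag_mx.
    have [d0|dn0] := eqVneq (d 0 i) 0; first by rewrite d0 scale0r sub0mx.
    by rewrite scalemx_sub // (sumsmx_sup i) ?inE ?genmxE.
  apply/sumsmx_subP => i; rewrite inE genmxE => dn0.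
  by rewrite -[delta_mx _ _](scalerK dn0) -row_diag_mx scalemx_sub ?row_sub.
rewrite eqD; have /mxdirectP-> := @mxdirect_delta F _ (mem D) n id (in2W (@inj_id _)).
by rewrite -sum1_card; apply: eq_bigr => i _; rewrite /= mxrank_gen mxrank_delta.
Qed.

Lemma is_diag_mxPn n (A : 'M[F]_n) :
  ~~ is_diag_mx A -> exists i j, i != j /\ A i j != 0.
Proof.
by move=> /forallPn[i /forallPn[j]]; rewrite negb_imply => /andP[ij Aij]; exists i, j.
Qed.

End MatrixFacts.

Section ComplexReflections.
Local Open Scope complex_scope.
Variables (R : realType) (n : nat).
Implicit Types (g s : 'M[R[i]]_n) (v : 'cV[R[i]]_n).

Local Ltac eqb_simpl := repeat match goal with
  | H : is_true (?a != ?b) |- context [?a == ?b] => rewrite (negbTE H)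
  | H : is_true (?a != ?b) |- context [?b == ?a] => rewrite [b == a]eq_sym (negbTE H)
  end; rewrite ?eqxx /= ?mulr1n ?mulr0n.

Lemma codimE g : codim g = \rank (g - 1%:M).
Proof.
by rewrite /codim /fixspace mxrank_ker mxrank_tr subKn // rank_leq_row.
Qed.

Lemma codim_diag g : is_diag_mx g -> codim g = #|[set i | g i i != 1]|.
Proof.
move=> /is_diag_mxP g_diag; rewrite codimE.
have -> : g - 1%:M = diag_mx (\row_i (g i i - 1)).
  apply/matrixP => i j; rewrite !mxE; case: eqVneq => [->|ij] /=.
    by rewrite mulr1n.
  by rewrite g_diag // subr0 mulr0n.
by rewrite rank_diag_mx; apply: eq_card => i; rewrite !inE mxE subr_eq0.
Qed.

Lemma reflection_unit s : reflection s -> s \in unitmx.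
Proof.
by case=> -[[|k] [//= _ /mulmx1_unit[]]].
Qed.

Lemma reflection_rank s : reflection s -> \rank (s - 1%:M) = 1%N.
Proof.
move=> [_ [s_neq1 [H [rH /mxrankS]]]]; rewrite rH /fixspace mxrank_ker mxrank_tr.
have := rank_leq_row (s - 1%:M); have : \rank (s - 1%:M) != 0%N.
  by rewrite mxrank_eq0 subr_eq0.
lia.
Qed.

Lemma reflection_of_rank1 s :
  finite_order s -> \rank (s - 1%:M) = 1%N -> reflection s.
Proof.
move=> s_fin rs; split=> //; split.
  by apply: contra_eq_neq rs => ->; rewrite subrr mxrank0.
by exists (fixspace s); rewrite /fixspace mxrank_ker mxrank_tr rs subn1.
Qed.

(* If the fixed space of [h := s^-1 g] lay inside that of [s], it would lie
   inside that of [g = s h], which additivity of codimensions forbids. *)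
Lemma le_perp_reflection_witness s g : reflection s -> le_perp s g ->
  exists v, g *m v = s *m v /\ s *m v != v.
Proof.
move=> s_refl; rewrite /le_perp; set h := invmx s *m g => le_sg.
have g_sh : g = s *m h by rewrite /h mulKVmx ?reflection_unit.
have fix_Tmul A (w : 'rV[R[i]]_n) : (w <= fixspace A)%MS = (A *m w^T == w^T).
  rewrite /fixspace sub_kermx -[w in w *m _]trmxK -trmx_mul trmx_eq0.
  by rewrite mulmxBl mul1mx subr_eq0.
have : ~~ (fixspace h <= fixspace s)%MS.
  apply/negP => fix_hs.
  have fix_hg : (fixspace h <= fixspace g)%MS.
    apply/row_subP => r; have w_h := row_sub r (fixspace h).
    move: w_h (submx_trans w_h fix_hs).
    by rewrite !fix_Tmul g_sh -mulmxA => /eqP-> /eqP->.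
  move: le_sg (mxrankS fix_hg) (reflection_rank s_refl).
  rewrite !codimE /codim /fixspace !mxrank_ker !mxrank_tr.
  have := rank_leq_row (h - 1%:M); have := rank_leq_row (g - 1%:M); lia.
case/row_subPn => r; rewrite fix_Tmul => sv_neq_v.
have := row_sub r (fixspace h); rewrite fix_Tmul => /eqP h_fix.
by exists (row r (fixspace h))^T; rewrite g_sh -mulmxA h_fix.
Qed.

Lemma perm_mx_inGmpn m p (sigma : 'S_n) : inGmpn m p (perm_mx sigma : 'M[R[i]]_n).
Proof.
set P : 'M[R[i]]_n := perm_mx sigma.
have P_E i j : P i j = (sigma i == j)%:R by rewrite !mxE.
have P_nz i j : (P i j != 0) = (sigma i == j).
  by rewrite P_E; case: (sigma i == j); rewrite ?oner_eq0 ?mulr0n ?eqxx.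
have P_1 i j : P i j != 0 -> P i j = 1 by rewrite P_nz P_E => ->.
split; first split; first split.
- move=> i; apply/eqP/cards1P; exists (sigma i); apply/setP => j.
  by rewrite !inE P_nz eq_sym.
- move=> j; apply/eqP/cards1P; exists (sigma^-1 j)%g; apply/setP => i.
  by rewrite !inE P_nz -[j in LHS](permKV sigma) (inj_eq perm_inj).
- by move=> i j /P_1->; rewrite expr1n.
- by rewrite big1 ?expr1n // => i _; apply: big1 => j /P_1.
Qed.

Lemma rank_diag_sub_tperm_mx g i j : is_diag_mx g -> i != j ->
    g i i * g j j = 1 -> (forall k, k != i -> k != j -> g k k = 1) ->
  \rank (g - perm_mx (tperm i j)) = 1%N.
Proof.
move=> /is_diag_mxP g_diag ij gij g1.
have gi0 : g i i != 0.
  by apply: contra_eq_neq gij => ->; rewrite mul0r eq_sym oner_eq0.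
rewrite -(@rank_outer _ _ _ (fun k => (k == i)%:R * g i i - (k == j)%:R)
  (fun l => (l == i)%:R - (l == j)%:R * g j j) i i); last 2 first.
- by rewrite eqxx (negbTE ij) /= mulr1n mulr0n subr0 mul1r.
- by rewrite eqxx (negbTE ij) /= mulr1n mulr0n mul0r subr0 oner_eq0.
have gjE : g j j = (g i i)^-1 by apply: (mulfI gi0); rewrite gij mulfV.
apply: congr1; apply/matrixP => k l; rewrite !mxE.
have -> : g k l = (k == l)%:R * g k k.
  by have [->|/g_diag->] := eqVneq k l; rewrite ?mulr1n ?mul1r ?mulr0n ?mul0r.
case: tpermP => [->|->|/eqP ki /eqP kj]; last by rewrite (g1 k) //; eqb_simpl; ring.
all: have [->|li] := eqVneq l i; [|have [_|lj] := eqVneq l j].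
all: by eqb_simpl; rewrite ?gjE; field.
Qed.

Lemma tperm_mx_mulmx_self i j :
  (perm_mx (tperm i j) : 'M[R[i]]_n) *m perm_mx (tperm i j) = 1%:M.
Proof. by rewrite -perm_mxM tperm2 perm_mx1. Qed.

Lemma rank_tperm_mx_mul_sub1 g i j : is_diag_mx g -> i != j ->
    g i i * g j j = 1 -> (forall k, k != i -> k != j -> g k k = 1) ->
  \rank (perm_mx (tperm i j) *m g - 1%:M) = 1%N.
Proof.
move=> g_diag ij gij g1; rewrite -(tperm_mx_mulmx_self i j) -mulmxBr.
by rewrite eqmxMfull ?row_full_unit ?unitmx_perm // rank_diag_sub_tperm_mx.
Qed.

Lemma tperm_mx_reflection i j : i != j ->
  reflection (perm_mx (tperm i j) : 'M[R[i]]_n).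
Proof.
move=> ij; apply: reflection_of_rank1.
  by exists 2%N; rewrite /= mulmx1 tperm_mx_mulmx_self.
rewrite -[perm_mx _]mulmx1 rank_tperm_mx_mul_sub1 ?scalar_mx_is_diag //.
  by rewrite !mxE !eqxx mulr1.
by move=> k _ _; rewrite mxE eqxx.
Qed.

Lemma le_perp_tperm_mx g i j : is_diag_mx g -> i != j ->
    g i i * g j j = 1 -> (forall k, k != i -> k != j -> g k k = 1) ->
  codim g = 2%N -> le_perp (perm_mx (tperm i j)) g.
Proof.
move=> g_diag ij gij g1 codim_g.
have invP : invmx (perm_mx (tperm i j)) = perm_mx (tperm i j) :> 'M[R[i]]_n.
  rewrite -[LHS]mulmx1 -(tperm_mx_mulmx_self i j) mulmxA.
  by rewrite mulVmx ?unitmx_perm ?mul1mx.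
rewrite /le_perp invP !codimE rank_tperm_mx_mul_sub1 //.
by rewrite (reflection_rank (tperm_mx_reflection ij)) -codimE codim_g.
Qed.

Lemma monomial_row_uniq s i j j' :
  monomial s -> s i j != 0 -> s i j' != 0 -> j = j'.
Proof.
case=> /(_ i)/eqP/cards1P[l /setP l_row] _.
by move: (l_row j) (l_row j'); rewrite !inE => -> -> /eqP-> /eqP->.
Qed.

Lemma monomial_col_uniq s i i' j :
  monomial s -> s i j != 0 -> s i' j != 0 -> i = i'.
Proof.
case=> _ /(_ j)/eqP/cards1P[l /setP l_col].
by move: (l_col i) (l_col i'); rewrite !inE => -> -> /eqP-> /eqP->.
Qed.

Lemma monomial_diag_neq0 s i : monomial s -> is_diag_mx s -> s i i != 0.
Proof.
case=> /(_ i)/eqP/cards1P[j /setP/(_ j)] + _ /is_diag_mxP s_diag.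
rewrite !inE eqxx; have [->//|ij] := eqVneq i j.
by rewrite s_diag // eqxx.
Qed.

Lemma monomial_swap_mulmx s x y :
    monomial s -> (\rank (s - 1%:M)%R <= 1)%N -> x != y -> s x y != 0 ->
  s x y * s y x = 1 /\
  forall v k, (s *m v) k 0 = if k == x then s x y * v y 0
                             else if k == y then s y x * v x 0 else v k 0.
Proof.
move=> s_mono /rank_le1_minor minor xy sxy.
have subE k l : (s - 1%:M) k l = s k l - (k == l)%:R by rewrite !mxE.
have s_colNy k : k != x -> s k y = 0.
  by apply: contraNeq => sky; rewrite (monomial_col_uniq s_mono sky sxy).
have s_rowNx l : l != y -> s x l = 0.
  by apply: contraNeq => sxl; rewrite (monomial_row_uniq s_mono sxl sxy).
have syx1 : s x y * s y x = 1.
  have := minor x y y x; rewrite !subE (s_rowNx x) // (s_colNy y) 1?eq_sym //.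
  by eqb_simpl; rewrite !subr0 sub0r mulrNN mulr1 => ->.
have syx : s y x != 0 by apply: contra_eq_neq syx1 => ->; rewrite mulr0 eq_sym oner_eq0.
have s_rowNy l : l != x -> s y l = 0.
  by apply: contraNeq => syl; rewrite (monomial_row_uniq s_mono syl syx).
have s_id k l : k != x -> k != y -> s k l = (k == l)%:R.
  move=> kx ky; have := minor y k y l.
  rewrite !subE (s_colNy y) 1?eq_sym // (s_colNy k) //; eqb_simpl.
  rewrite sub0r subr0 mulr0 mulN1r => /eqP.
  by rewrite oppr_eq0 subr_eq0 => /eqP.
split=> // v k; have [->|kx] := eqVneq k x.
  by apply: mulmx_row_single => l /s_rowNx.
have [->|ky] := eqVneq k y; first by apply: mulmx_row_single => l /s_rowNy.
rewrite (@mulmx_row_single _ _ _ _ _ _ _ k) ?s_id ?eqxx ?mul1r // => l lk.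
by rewrite s_id // eq_sym (negbTE lk).
Qed.

Lemma exists_col_neq v w : v != w -> exists k, v k 0 != w k 0.
Proof.
move=> vw; apply/existsP; apply: contraNT vw => /existsPn vw_eq.
by apply/eqP/matrixP => k j; rewrite (ord1 j); apply/eqP/negbNE.
Qed.

Lemma le_perp_swap_eigen g s v x y : is_diag_mx g -> (forall k, g k k != 0) ->
    monomial s -> (\rank (s - 1%:M)%R <= 1)%N -> x != y -> s x y != 0 ->
    g *m v = s *m v -> s *m v != v ->
  [/\ g x x * g y y = 1, g x x != 1 & g y y != 1].
Proof.
move=> g_diag g_nz s_mono rs xy sxy gv /exists_col_neq[k0 sv_k0].
have [syx1 svE] := monomial_swap_mulmx s_mono rs xy sxy.
have eigE k : g k k * v k 0 = (s *m v) k 0 by rewrite -mulmx_diagE // gv.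
have Ex := eigE x; rewrite svE eqxx in Ex.
have Ey := eigE y; rewrite svE eq_sym (negbTE xy) eqxx in Ey.
have sv_xy : (s x y * v y 0 != v x 0) || (s y x * v x 0 != v y 0).
  move: sv_k0; rewrite svE; case: (eqVneq k0 x) => [-> /= ->//|_].
  by case: (eqVneq k0 y) => [-> /= ->|_ /=]; rewrite ?orbT ?eqxx.
have vx0 : v x 0 != 0.
  apply: contraTneq sv_xy => vx0.
  have vy0 : v y 0 = 0.
    by apply/eqP; move: Ey; rewrite vx0 mulr0 => /eqP; rewrite mulf_eq0 (negbTE (g_nz y)).
  by rewrite vx0 vy0 !mulr0 eqxx.
have vy0 : v y 0 != 0.
  by apply: contraNneq (mulf_neq0 (g_nz x) vx0) => vy0; rewrite Ex vy0 mulr0.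
have gxy : g x x * g y y = 1.
  apply: (mulIf (mulf_neq0 vx0 vy0)); rewrite mul1r.
  by rewrite mulrACA Ex Ey mulrACA syx1 mul1r mulrC.
have gx1 : g x x != 1.
  apply: contraTneq sv_xy => gx1; move: gxy; rewrite gx1 mul1r => gy1.
  by rewrite -Ex -Ey gx1 gy1 !mul1r !eqxx.
split=> //; apply: contra_neq gx1 => gy1.
by move: gxy; rewrite gy1 mulr1.
Qed.

Lemma le_perp_diag_eigen g s v : is_diag_mx g -> is_diag_mx s ->
    (\rank (s - 1%:M)%R <= 1)%N -> g *m v = s *m v -> s *m v != v ->
  exists i, [/\ g i i = s i i, s i i != 1 & forall k, k != i -> s k k = 1].
Proof.
move=> g_diag s_diag /rank_le1_minor minor gv /exists_col_neq[i sv_i].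
rewrite mulmx_diagE // in sv_i.
have vi0 : v i 0 != 0 by apply: contraNneq sv_i => ->; rewrite mulr0.
exists i; split.
- by apply: (mulIf vi0); rewrite -!mulmx_diagE // gv.
- by apply: contraNneq sv_i => ->; rewrite mul1r.
move=> k ki; have := minor i k i k; rewrite !mxE !eqxx.
have /is_diag_mxP s_off := s_diag.
rewrite (s_off i k) 1?eq_sym // (s_off k i) //; eqb_simpl; rewrite !subr0 mulr0.
move/eqP; rewrite mulf_eq0 !subr_eq0 => /orP[/eqP sii1|/eqP //].
by move: sv_i; rewrite sii1 mul1r eqxx.
Qed.

Lemma diag_finite_order g k : is_diag_mx g -> (0 < k)%N ->
  (forall i, g i i ^+ k = 1) -> finite_order g.
Proof.
move=> g_diag k_gt0 gk; exists k; split=> //.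
suff -> : iter k (mulmx g) 1%:M = \matrix_(i, j) ((i == j)%:R * g i i ^+ k).
  by apply/matrixP => i j; rewrite !mxE gk mulr1.
elim: k {k_gt0 gk} => [|k IHk]; first by apply/matrixP => i j; rewrite !mxE mulr1.
by apply/matrixP => i j; rewrite /= IHk mulmx_diagE // !mxE exprS mulrCA.
Qed.
End ComplexReflections.

Section PConnected.
Local Open Scope complex_scope.
Variables (R : realType) (m p n : nat) (g : 'M[R[i]]_n) (c : 'I_n -> int).
Hypotheses (m_gt0 : (0 < m)%N) (p_gt0 : (0 < p)%N) (p_dvd_m : (p %| m)%N).
Hypotheses (g_diag : is_diag_mx g) (gE : forall i, g i i = zeta R m ^ c i).
Local Notation S := [set i | g i i != 1].
Hypothesis c_min : forall I : {set 'I_n}, I != set0 -> I \proper S ->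
  ~~ (p%:Z %| \sum_(i in I) c i)%Z.

Lemma zeta_expz_eq1_dvdp (z : int) : zeta R m ^ z = 1 -> (p%:Z %| z)%Z.
Proof. by move/(zeta_expz_eq1 m_gt0); apply: dvdz_trans; rewrite dvdzE. Qed.

Lemma zeta_diag_neq0 k : g k k != 0.
Proof. by rewrite gE expfz_neq0 // -unitfE zeta_unit. Qed.

Lemma support_eq_dvd (I : {set 'I_n}) :
  I \subset S -> I != set0 -> (p%:Z %| \sum_(i in I) c i)%Z -> I = S.
Proof.
move=> IS I0; apply: contraTeq => I_neq_S.
by apply: c_min => //; rewrite properEneq I_neq_S.
Qed.

Lemma codim2_conj_eigenpair x y :
    x != y -> g x x * g y y = 1 -> g x x != 1 -> g y y != 1 ->
  codim g = 2%N /\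
  exists c : int, exists i j : 'I_n,
    i != j /\ g i i = zeta R m ^ c /\ g j j = zeta R m ^ (- c) /\
    (forall k, k != i -> k != j -> g k k = 1).
Proof.
move=> xy gxy gx1 gy1.
have S_xy : [set x; y] = S.
  apply: support_eq_dvd.
  - by apply/subsetP => k; rewrite !inE => /orP[] /eqP->.
  - by apply/set0Pn; exists x; rewrite !inE eqxx.
  - rewrite big_setU1 ?inE //= big_set1; apply: zeta_expz_eq1_dvdp.
    by rewrite exprzDr ?zeta_unit // -!gE.
split; first by rewrite codim_diag // -S_xy cards2 xy.
exists (c x), x, y; do !split => //.
  by apply: (mulfI (zeta_diag_neq0 x)); rewrite gxy gE -exprzDr ?zeta_unit // addrN.
move=> k kx ky; apply/eqP; apply: contraT => gk1.
have : k \in S by rewrite inE.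
by rewrite -S_xy !inE (negbTE kx) (negbTE ky).
Qed.

Lemma le_perp_diag_reflection (s : 'M[R[i]]_n) (v : 'cV[R[i]]_n) :
    inGmpn m p s -> is_diag_mx s ->
    (\rank (s - 1%:M)%R <= 1)%N -> g *m v = s *m v -> s *m v != v ->
  diag_reflection g.
Proof.
move=> [[s_mono _] s_prod] s_diag rs gv sv.
have [i [gs si1 s1]] := le_perp_diag_eigen g_diag s_diag rs gv sv.
have row_prod k : \prod_(l < n | s k l != 0) s k l = s k k.
  apply: big_pred1 => l /=; have [->|lk] := eqVneq l k.
    by rewrite monomial_diag_neq0.
  by move/is_diag_mxP: s_diag => ->; rewrite ?eqxx // eq_sym.
have p_ci : (p%:Z %| c i)%Z.
  have : ((m : int) %| c i * (m %/ p)%N)%Z.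
    apply: (@zeta_expz_eq1 R m m_gt0); rewrite -exprz_exp -gE gs -s_prod.
    rewrite (eq_bigr (fun k => s k k)) => [|k _]; last exact: row_prod.
    by rewrite (bigD1 i) //= big1 ?mulr1 // => k /s1.
  have -> : (m : int) = p%:Z * (m %/ p)%N by rewrite -PoszM mulnC divnK.
  by rewrite dvdz_mul2r // -lt0n divn_gt0 // dvdn_leq.
have S_i : [set i] = S.
  apply: support_eq_dvd; last by rewrite big_set1.
    by rewrite sub1set inE gs.
  by apply/set0Pn; exists i; rewrite inE.
split=> //; apply: reflection_of_rank1.
  apply: (diag_finite_order g_diag m_gt0) => k.
  have zeta_m : zeta R m ^ m%:Z = 1 by exact: prim_expr_order (zeta_prim _ m_gt0).
  by rewrite gE -[_ ^+ m]/(_ ^ m%:Z) exprzAC zeta_m exp1rz.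
by rewrite -codimE codim_diag // -S_i cards1.
Qed.

End PConnected.

Local Open Scope complex_scope.

Theorem mainTheorem6 (R : realType) (m p n : nat) :
  (0 < m)%N -> (0 < p)%N -> (0 < n)%N -> (p %| m)%N ->
  forall g : 'M[R[i]]_n,
    inGmpn m p g -> p_connected m p g -> ~ diag_reflection g ->
    ((exists s : 'M[R[i]]_n, inGmpn m p s /\ reflection s /\ le_perp s g)
     <->
     (codim g = 2%N /\
      exists c : int, exists i j : 'I_n,
        i != j /\ g i i = zeta R m ^ c /\ g j j = zeta R m ^ (- c) /\
        (forall k, k != i -> k != j -> g k k = 1))).
Proof.
move=> m_gt0 p_gt0 _ p_dvd_m g _ [g_diag [_ [c [gE /= [_ c_min]]]]] g_ndr.
split=> [[s [s_in [s_refl le_sg]]]|[codim_g [c0 [i [j [ij [gi [gj g1]]]]]]]].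
  have [v [gv sv]] := le_perp_reflection_witness s_refl le_sg.
  have rs : (\rank (s - 1%:M)%R <= 1)%N by rewrite reflection_rank.
  have [s_diag|/is_diag_mxPn[x [y [xy sxy]]]] := boolP (is_diag_mx s).
    case: g_ndr; exact: (le_perp_diag_reflection m_gt0 p_gt0 p_dvd_m g_diag gE c_min
                           s_in s_diag rs gv sv).
  have g_nz := zeta_diag_neq0 m_gt0 gE.
  have [gxy gx1 gy1] := le_perp_swap_eigen g_diag g_nz s_in.1.1 rs xy sxy gv sv.
  exact: (codim2_conj_eigenpair m_gt0 p_dvd_m g_diag gE c_min xy gxy gx1 gy1).
exists (perm_mx (tperm i j)); split; first exact: perm_mx_inGmpn.
split; first exact: tperm_mx_reflection.
by apply: le_perp_tperm_mx => //; rewrite gi gj -exprzDr ?zeta_unit // addrN.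
Qed.
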